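(* Let $a>0$. If $\phi\in\mathcal D[0,\infty)$ is absolutely continuous on every compact interval $[0,T]$, then so is $\Lambda_a(\phi)$.
   Context: $\mathcal D[0,\infty)$ is the space of right-continuous functions $[0,\infty)\to\mathbb R$ with left limits. Notation: $x^+=\max(x,0)$, $x\wedge y=\min(x,y)$. For $a>0$, $\Lambda_a(\phi)(t)=\phi(t)-\sup_{s\in[0,t]}\big[(\phi(s)-a)^+\wedge\inf_{u\in[s,t]}\phi(u)\big]$. *)

From Stdlib Require Import Reals Lra List Classical ClassicalEpsilon.
Open Scope R_scope.

(* Supremum of a set of reals: the least upper bound when the set is
   nonempty and bounded above (junk value 0 otherwise). *)
Definition Rsup (E : R -> Prop) : R :=
  match excluded_middle_informative (bound E /\ exists x, E x) with
  | left H => proj1_sig (completeness E (proj1 H) (proj2 H))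
  | right _ => 0
  end.

Definition Rinf (E : R -> Prop) : R := - Rsup (fun y => E (- y)).

Definition Rpos (x : R) : R := Rmax x 0.

Definition Lambda (a : R) (phi : R -> R) (t : R) : R :=
  phi t - Rsup (fun y => exists s, 0 <= s <= t /\
     y = Rmin (Rpos (phi s - a))
              (Rinf (fun z => exists u, s <= u <= t /\ z = phi u))).

Definition cadlag (phi : R -> R) : Prop :=
  (forall t, 0 <= t -> forall eps, eps > 0 -> exists delta, delta > 0 /\
       forall s, t <= s < t + delta -> Rabs (phi s - phi t) < eps) /\
  (forall t, 0 < t -> exists L, forall eps, eps > 0 -> exists delta, delta > 0 /\
       forall s, 0 <= s -> t - delta < s < t -> Rabs (phi s - L) < eps).

Definition abs_cont_on (f : R -> R) (a b : R) : Prop :=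
  forall eps, eps > 0 -> exists delta, delta > 0 /\
    forall l : list (R * R),
      (forall p, In p l -> a <= fst p /\ fst p <= snd p /\ snd p <= b) ->
      ForallOrdPairs (fun p q => snd p <= fst q \/ snd q <= fst p) l ->
      fold_right Rplus 0 (map (fun p => snd p - fst p) l) < delta ->
      fold_right Rplus 0 (map (fun p => Rabs (f (snd p) - f (fst p))) l) < eps.

(* Write Lambda_a(phi) = phi - S, where the "regulator"
     S(t) = sup_{0<=r<=t} min((phi r - a)^+, inf_{u in [r,t]} phi u).
   The heart of the proof is an oscillation estimate: for 0 <= s <= t <= T,
     |S t - S s| <= sup_{u in [s,t]} |phi u - phi s|,
   so every increment of S is, up to an arbitrarily small error, dominated by
   an increment of phi over a subinterval of [s,t].  A general fact then says
   that a function whose increments are dominated in this way by those of an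
   absolutely continuous function is itself absolutely continuous (replace each
   interval of a non-overlapping family by the dominating subinterval).  Since
   absolute continuity is stable under differences, Lambda_a(phi) = phi - S is
   absolutely continuous. *)

From Stdlib Require Import Reals Lra List Classical ClassicalEpsilon.
Open Scope R_scope.

Lemma Rabs_le_inv (x b : R) : Rabs x <= b -> - b <= x <= b.
Proof. unfold Rabs. destruct Rcase_abs; intros; lra. Qed.

Lemma Rsup_is_lub (E : R -> Prop) : bound E -> (exists x, E x) -> is_lub E (Rsup E).
Proof.
  intros Hbound Hne. unfold Rsup.
  destruct (excluded_middle_informative _) as [H | H].
  - exact (proj2_sig (completeness E (proj1 H) (proj2 H))).
  - exfalso. exact (H (conj Hbound Hne)).
Qed.

Lemma Rsup_upper (E : R -> Prop) (B x : R) :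
  (forall y, E y -> y <= B) -> E x -> x <= Rsup E.
Proof.
  intros HB Hx. apply (Rsup_is_lub E); [exists B; exact HB | exists x; exact Hx | exact Hx].
Qed.

Lemma Rsup_least (E : R -> Prop) (b : R) :
  (exists x, E x) -> (forall y, E y -> y <= b) -> Rsup E <= b.
Proof.
  intros Hne Hb. apply (Rsup_is_lub E); [exists b; exact Hb | exact Hne | exact Hb].
Qed.

Lemma Rinf_lower (E : R -> Prop) (c x : R) :
  (forall y, E y -> c <= y) -> E x -> Rinf E <= x.
Proof.
  intros Hc Hx. unfold Rinf.
  enough (- x <= Rsup (fun y => E (- y))) by lra.
  apply Rsup_upper with (B := - c).
  - intros y Hy. specialize (Hc _ Hy). lra.
  - rewrite Ropp_involutive. exact Hx.
Qed.

Lemma Rinf_greatest (E : R -> Prop) (b : R) :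
  (exists x, E x) -> (forall y, E y -> b <= y) -> b <= Rinf E.
Proof.
  intros [x Hx] Hb. unfold Rinf.
  enough (Rsup (fun y => E (- y)) <= - b) by lra.
  apply Rsup_least.
  - exists (- x). rewrite Ropp_involutive. exact Hx.
  - intros y Hy. specialize (Hb _ Hy). lra.
Qed.

Definition run_inf (phi : R -> R) (r t : R) : R :=
  Rinf (fun z => exists u, r <= u <= t /\ z = phi u).

Definition reflection_term (a : R) (phi : R -> R) (t r : R) : R :=
  Rmin (Rpos (phi r - a)) (run_inf phi r t).

Definition regulator (a : R) (phi : R -> R) (t : R) : R :=
  Rsup (fun y => exists r, 0 <= r <= t /\ y = reflection_term a phi t r).

Lemma Lambda_regulator (a : R) (phi : R -> R) :
  Lambda a phi = fun t => phi t - regulator a phi t.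
Proof. reflexivity. Qed.

Section Regulator.

Variables (a B T : R) (phi : R -> R).
(* All suprema and infima involved are finite because phi is bounded on [0,T]. *)
Hypothesis phi_bounded : forall v, 0 <= v <= T -> Rabs (phi v) <= B.

Lemma run_inf_le (r t u : R) : 0 <= r -> t <= T -> r <= u <= t -> run_inf phi r t <= phi u.
Proof.
  intros Hr Ht Hu. apply Rinf_lower with (c := - B).
  - intros y [v [Hv ->]].
    assert (Hbv : Rabs (phi v) <= B) by (apply phi_bounded; lra).
    apply Rabs_le_inv in Hbv. lra.
  - exists u. split; [lra | reflexivity].
Qed.

Lemma run_inf_ge (r t c : R) : r <= t ->
  (forall u, r <= u <= t -> c <= phi u) -> c <= run_inf phi r t.
Proof.
  intros Hrt Hc. apply Rinf_greatest.
  - exists (phi r), r. split; [lra | reflexivity].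
  - intros y [u [Hu ->]]. apply Hc; lra.
Qed.

Lemma run_inf_point (s : R) : 0 <= s <= T -> run_inf phi s s = phi s.
Proof.
  intros Hs. apply Rle_antisym.
  - apply run_inf_le; lra.
  - apply run_inf_ge; [lra |]. intros u Hu. replace u with s by lra. lra.
Qed.

(* Each reflection term is at most phi t <= B, so the regulator is finite. *)
Lemma reflection_term_bounded (t r : R) :
  0 <= r <= t -> t <= T -> reflection_term a phi t r <= B.
Proof.
  intros Hr Ht. unfold reflection_term.
  assert (Hm : run_inf phi r t <= phi t) by (apply run_inf_le; lra).
  assert (Hbt : Rabs (phi t) <= B) by (apply phi_bounded; lra).
  apply Rabs_le_inv in Hbt.
  pose proof (Rmin_r (Rpos (phi r - a)) (run_inf phi r t)). lra.
Qed.

Lemma regulator_ge (t r : R) :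
  t <= T -> 0 <= r <= t -> reflection_term a phi t r <= regulator a phi t.
Proof.
  intros Ht Hr. apply Rsup_upper with (B := B).
  - intros y [r' [Hr' ->]]. apply reflection_term_bounded; lra.
  - exists r. split; [lra | reflexivity].
Qed.

Lemma regulator_le (t b : R) : 0 <= t ->
  (forall r, 0 <= r <= t -> reflection_term a phi t r <= b) -> regulator a phi t <= b.
Proof.
  intros Ht Hb. apply Rsup_least.
  - exists (reflection_term a phi t 0), 0. split; [lra | reflexivity].
  - intros y [r [Hr ->]]. apply Hb; lra.
Qed.

(* If phi does not drop more than M below phi s on [s,t], then neither does
   the regulator: each running infimum over [r,t] loses at most M. *)
Lemma regulator_forward (s t M : R) : 0 <= s <= t -> t <= T ->
  (forall u, s <= u <= t -> phi s - M <= phi u) ->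
  regulator a phi s <= regulator a phi t + M.
Proof.
  intros Hst Ht Hdrop.
  assert (HM : 0 <= M) by (specialize (Hdrop s ltac:(lra)); lra).
  apply regulator_le; [lra |]. intros r Hr.
  assert (Hm_s : run_inf phi r s <= phi s) by (apply run_inf_le; lra).
  assert (Hm_t : run_inf phi r s - M <= run_inf phi r t).
  { apply run_inf_ge; [lra |]. intros u Hu. destruct (Rle_dec u s).
    - assert (run_inf phi r s <= phi u) by (apply run_inf_le; lra). lra.
    - assert (phi s - M <= phi u) by (apply Hdrop; lra). lra. }
  assert (Hterm : reflection_term a phi t r <= regulator a phi t)
    by (apply regulator_ge; lra).
  unfold reflection_term in *. revert Hm_t Hterm.
  unfold Rmin. repeat destruct Rle_dec; intros; lra.
Qed.

(* If phi does not rise more than M above phi s on [s,t], then neither does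
   the regulator: terms with r <= s only decrease, and terms with r > s are
   bounded by the term at r = s plus M. *)
Lemma regulator_backward (s t M : R) : 0 <= s <= t -> t <= T ->
  (forall u, s <= u <= t -> phi u <= phi s + M) ->
  regulator a phi t <= regulator a phi s + M.
Proof.
  intros Hst Ht Hrise.
  assert (HM : 0 <= M) by (specialize (Hrise s ltac:(lra)); lra).
  apply regulator_le; [lra |]. intros r Hr. destruct (Rle_dec r s).
  - assert (Hm : run_inf phi r t <= run_inf phi r s).
    { apply run_inf_ge; [lra |]. intros u Hu. apply run_inf_le; lra. }
    assert (Hterm : reflection_term a phi s r <= regulator a phi s)
      by (apply regulator_ge; lra).
    unfold reflection_term in *. revert Hm Hterm.
    unfold Rmin. repeat destruct Rle_dec; intros; lra.
  - assert (Hterm : reflection_term a phi s s <= regulator a phi s)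
      by (apply regulator_ge; lra).
    assert (Hm : run_inf phi r t <= phi r) by (apply run_inf_le; lra).
    assert (Hr_s : phi r <= phi s + M) by (apply Hrise; lra).
    unfold reflection_term in *. rewrite run_inf_point in Hterm by lra.
    revert Hterm Hm Hr_s.
    unfold Rmin, Rpos, Rmax. repeat destruct Rle_dec; intros; lra.
Qed.

Lemma regulator_oscillation (s t M : R) : 0 <= s <= t -> t <= T ->
  (forall u, s <= u <= t -> Rabs (phi u - phi s) <= M) ->
  Rabs (regulator a phi t - regulator a phi s) <= M.
Proof.
  intros Hst Ht HM.
  assert (Hband : forall u, s <= u <= t -> phi s - M <= phi u <= phi s + M).
  { intros u Hu. specialize (HM u Hu). apply Rabs_le_inv in HM. lra. }
  pose proof (regulator_forward s t M Hst Ht (fun u Hu => proj1 (Hband u Hu))).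
  pose proof (regulator_backward s t M Hst Ht (fun u Hu => proj2 (Hband u Hu))).
  apply Rabs_le. lra.
Qed.

Lemma regulator_increment_witness (s t eta : R) : 0 <= s <= t -> t <= T -> eta > 0 ->
  exists u, s <= u <= t /\
    Rabs (regulator a phi t - regulator a phi s) <= Rabs (phi u - phi s) + eta.
Proof.
  intros Hst Ht Heta. apply NNPP. intros Hnone.
  assert (Hsmall : forall u, s <= u <= t -> Rabs (phi u - phi s)
            <= Rabs (regulator a phi t - regulator a phi s) - eta).
  { intros u Hu. apply Rnot_lt_le. intros Hlt. apply Hnone. exists u. split; lra. }
  pose proof (regulator_oscillation s t _ Hst Ht Hsmall). lra.
Qed.

End Regulator.

Definition total_length (l : list (R * R)) : R :=
  fold_right Rplus 0 (map (fun p => snd p - fst p) l).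

Definition total_variation (f : R -> R) (l : list (R * R)) : R :=
  fold_right Rplus 0 (map (fun p => Rabs (f (snd p) - f (fst p))) l).

Definition nonoverlapping (p q : R * R) : Prop := snd p <= fst q \/ snd q <= fst p.

Definition subinterval (p p' : R * R) : Prop :=
  fst p <= fst p' /\ fst p' <= snd p' /\ snd p' <= snd p.

Lemma refine_nonoverlapping_one (p p' : R * R) (l l' : list (R * R)) :
  subinterval p p' -> Forall2 subinterval l l' ->
  Forall (nonoverlapping p) l -> Forall (nonoverlapping p') l'.
Proof.
  intros Hp Hrefine. induction Hrefine as [| q q' l l' Hq _ IH]; intros Hdisj;
    inversion Hdisj; subst; constructor.
  - unfold subinterval, nonoverlapping in *. lra.
  - apply IH. assumption.
Qed.

Lemma refine_nonoverlapping (l l' : list (R * R)) :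
  Forall2 subinterval l l' -> ForallOrdPairs nonoverlapping l ->
  ForallOrdPairs nonoverlapping l'.
Proof.
  intros Hrefine. induction Hrefine as [| p p' l l' Hp Hl IH]; intros Hdisj;
    inversion Hdisj; subst; constructor.
  - eapply refine_nonoverlapping_one; eassumption.
  - apply IH. assumption.
Qed.

Lemma refine_within (lo hi : R) (l l' : list (R * R)) :
  Forall2 subinterval l l' ->
  (forall p, In p l -> lo <= fst p /\ fst p <= snd p /\ snd p <= hi) ->
  (forall p, In p l' -> lo <= fst p /\ fst p <= snd p /\ snd p <= hi).
Proof.
  intros Hrefine. induction Hrefine as [| q q' l l' Hq _ IH]; intros Hin p Hp.
  - destruct Hp.
  - destruct Hp as [<- | Hp].
    + specialize (Hin q (or_introl eq_refl)). unfold subinterval in Hq. lra.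
    + apply IH; [| exact Hp]. intros r Hr. apply Hin. right. exact Hr.
Qed.

Lemma refine_length (l l' : list (R * R)) :
  Forall2 subinterval l l' -> total_length l' <= total_length l.
Proof.
  unfold total_length.
  intros Hrefine. induction Hrefine as [| p p' l l' Hp _ IH]; simpl; [lra |].
  unfold subinterval in Hp. lra.
Qed.

Lemma total_variation_minus (f g : R -> R) (l : list (R * R)) :
  total_variation (fun x => f x - g x) l <= total_variation f l + total_variation g l.
Proof.
  unfold total_variation. induction l as [| p l IH]; simpl; [lra |].
  replace (f (snd p) - g (snd p) - (f (fst p) - g (fst p)))
    with ((f (snd p) - f (fst p)) + - (g (snd p) - g (fst p))) by ring.
  pose proof (Rabs_triang (f (snd p) - f (fst p)) (- (g (snd p) - g (fst p)))).
  rewrite Rabs_Ropp in *. lra.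
Qed.

(* An absolutely continuous function is bounded: chain intervals of length
   delta/2 starting from lo. *)
Lemma abs_cont_bounded (f : R -> R) (lo hi : R) : abs_cont_on f lo hi ->
  exists B, forall v, lo <= v <= hi -> Rabs (f v) <= B.
Proof.
  intros Hac. destruct (Hac 1 ltac:(lra)) as [d [Hd Hsmall]].
  assert (Hstep : forall x y, lo <= x <= y -> y <= hi -> y - x <= d / 2 ->
            Rabs (f y - f x) < 1).
  { intros x y Hxy Hy Hlen.
    specialize (Hsmall ((x, y) :: nil)). simpl in Hsmall.
    enough (Rabs (f y - f x) + 0 < 1) by lra.
    apply Hsmall.
    - intros p [<- | []]. simpl. lra.
    - repeat constructor.
    - lra. }
  assert (Hchain : forall (n : nat) x, lo <= x <= hi -> x <= lo + INR n * (d / 2) ->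
            Rabs (f x - f lo) <= INR n).
  { induction n as [| n IH]; intros x Hx Hxn.
    - simpl in Hxn. replace x with lo by lra. unfold Rminus. rewrite Rplus_opp_r, Rabs_R0.
      simpl. lra.
    - rewrite S_INR in *. destruct (Rle_dec x (lo + INR n * (d / 2))) as [Hle | Hgt].
      + specialize (IH x Hx Hle). lra.
      + set (x' := Rmax lo (x - d / 2)).
        assert (Hx' : lo <= x' <= x /\ x - x' <= d / 2 /\ x' <= lo + INR n * (d / 2)).
        { unfold x', Rmax. destruct Rle_dec; pose proof (pos_INR n); nra. }
        specialize (IH x' ltac:(lra) ltac:(lra)).
        specialize (Hstep x' x ltac:(lra) ltac:(lra) ltac:(lra)).
        replace (f x - f lo) with ((f x - f x') + (f x' - f lo)) by ring.
        pose proof (Rabs_triang (f x - f x') (f x' - f lo)). lra. }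
  destruct (INR_archimed (d / 2) (hi - lo) ltac:(lra)) as [n Hn].
  exists (Rabs (f lo) + INR n). intros v Hv.
  specialize (Hchain n v Hv ltac:(lra)).
  replace (f v) with ((f v - f lo) + f lo) by ring.
  pose proof (Rabs_triang (f v - f lo) (f lo)). lra.
Qed.

Lemma abs_cont_minus (f g : R -> R) (lo hi : R) :
  abs_cont_on f lo hi -> abs_cont_on g lo hi -> abs_cont_on (fun x => f x - g x) lo hi.
Proof.
  intros Hf Hg eps Heps.
  destruct (Hf (eps / 2) ltac:(lra)) as [df [Hdf Hf']].
  destruct (Hg (eps / 2) ltac:(lra)) as [dg [Hdg Hg']].
  exists (Rmin df dg). split; [apply Rmin_pos; lra |].
  intros l Hin Hdisj Hlen.
  pose proof (Rmin_l df dg). pose proof (Rmin_r df dg).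
  specialize (Hf' l Hin Hdisj ltac:(lra)). specialize (Hg' l Hin Hdisj ltac:(lra)).
  pose proof (total_variation_minus f g l). unfold total_variation in *. lra.
Qed.

Section Domination.

Variables (f g : R -> R) (lo hi : R).
Hypothesis g_dominated : forall s t eta, lo <= s <= t -> t <= hi -> eta > 0 ->
  exists u, s <= u <= t /\ Rabs (g t - g s) <= Rabs (f u - f s) + eta.

Lemma dominated_refinement (l : list (R * R)) (eta : R) :
  (forall p, In p l -> lo <= fst p /\ fst p <= snd p /\ snd p <= hi) -> eta > 0 ->
  exists l', Forall2 subinterval l l' /\ total_variation g l <= total_variation f l' + eta.
Proof.
  unfold total_variation.
  revert eta. induction l as [| p l IH]; intros eta Hin Heta.
  - exists nil. split; [constructor | simpl; lra].
  - destruct (Hin p (or_introl eq_refl)) as [Hlo [Hp Hhi]].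
    destruct (g_dominated (fst p) (snd p) (eta / 2) ltac:(lra) Hhi ltac:(lra))
      as [u [Hu Hdom]].
    destruct (IH (eta / 2) (fun q Hq => Hin q (or_intror Hq)) ltac:(lra))
      as [l' [Hrefine Hvar]].
    exists ((fst p, u) :: l'). split.
    + constructor; [unfold subinterval; simpl; lra | exact Hrefine].
    + simpl. lra.
Qed.

Lemma abs_cont_dominated : abs_cont_on f lo hi -> abs_cont_on g lo hi.
Proof.
  intros Hf eps Heps.
  destruct (Hf (eps / 2) ltac:(lra)) as [d [Hd Hsmall]].
  exists d. split; [exact Hd |]. intros l Hin Hdisj Hlen.
  destruct (dominated_refinement l (eps / 2) Hin ltac:(lra)) as [l' [Hrefine Hvar]].
  assert (Hvar' : total_variation f l' < eps / 2).
  { apply Hsmall.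
    - exact (refine_within lo hi l l' Hrefine Hin).
    - exact (refine_nonoverlapping l l' Hrefine Hdisj).
    - pose proof (refine_length l l' Hrefine). unfold total_length in *. lra. }
  unfold total_variation in *. lra.
Qed.

End Domination.

Theorem corollary2p3 (a : R) (phi : R -> R) :
  a > 0 ->
  cadlag phi ->
  (forall T, 0 <= T -> abs_cont_on phi 0 T) ->
  forall T, 0 <= T -> abs_cont_on (Lambda a phi) 0 T.
Proof.
  intros _ _ Hac T HT.
  destruct (abs_cont_bounded phi 0 T (Hac T HT)) as [B HB].
  rewrite Lambda_regulator.
  apply abs_cont_minus; [exact (Hac T HT) |].
  apply abs_cont_dominated with (f := phi); [| exact (Hac T HT)].
  intros s t eta Hst Ht Heta.
  exact (regulator_increment_witness a B T phi HB s t eta Hst Ht Heta).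
Qed.
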